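(* Fix $\epsilon\in(0,1)$, $d\ge1$, and let $f$ be the binary-tree function of depth $d$ with all $p_i=\frac{1+\epsilon}{2}$; let $L=2^d$. For a non-adaptive strategy $S$ (a permutation of the $n$ edges) and input $x$, let $\mathrm{cost}^L(f,x,S)$ be the number of leaf-edge tests performed by $S$ on $x$ before $f(x)$ is determined. Then: (i) there exists a leaf-last non-adaptive strategy that minimizes $\mathbb{E}[\mathrm{cost}^L(f,x,S)\mid f(x)=1]$ over all non-adaptive strategies $S$; and (ii) for every leaf-last non-adaptive strategy $S$ attaining this minimum and every $\ell\in[L-1]$, $q_\ell(S)\ge q_{\ell+1}(S)$, where $q_\ell(S)$ denotes the probability, conditioned on $f(x)=1$, that the $\ell$-th leaf edge tested by $S$ is the first leaf edge in $S$'s order whose leaf is alive.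
   Context: Binary-tree function of depth $d$: take the complete binary tree of depth $d$ (root at depth $0$, $2^d$ leaves at depth $d$); it has $n=2^{d+1}-2$ edges, numbered $1,\dots,n$, and variable $x_i$ is associated with edge $i$. The input $x\in\{0,1\}^n$ has independent coordinates with $\Pr(x_i=1)=p_i$. A leaf is alive if $x_i=1$ for every edge $i$ on the root-to-leaf path; $f(x)=1$ iff at least one leaf is alive. A non-adaptive strategy is a fixed permutation of the edges, tested in that order until $f(x)$ is determined (i.e. until $f(x')=f(x)$ for all $x'$ agreeing with $x$ on the tested edges). Leaf edges are the edges joining a leaf to its parent; the others are internal edges. A non-adaptive strategy is leaf-last if all internal edges precede all leaf edges in its permutation. *)

From HB Require Import structures.
From mathcomp Require Import all_boot all_order all_algebra all_fingroup.
Set Implicit Arguments. Unset Strict Implicit. Unset Printing Implicit Defensive.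
Import Order.TTheory GRing.Theory Num.Theory.

(* Complete binary tree of depth d, heap numbering: nodes 1 .. 2^(d+1)-1,
   root 1, children of v are 2v and 2v+1, parent of v is v %/ 2.
   Each non-root node v is identified with the edge joining it to its parent;
   edge e : 'I_(nedges d) (0-based) is the edge of node e+2.
   So the n = 2^(d+1) - 2 edges are 'I_n (edge number i in the paper is e = i-1). *)
Definition nedges (d : nat) : nat := 2 ^ d.+1 - 2.

Definition node d (e : 'I_(nedges d)) : nat := e + 2.

Definition is_leaf_edge d (e : 'I_(nedges d)) : bool := 2 ^ d <= node e.

(* e' lies on the root-to-(node e) path, i.e. node e' is an ancestor-or-self of node e
   at depth >= 1 (nodes at distance k < d above a leaf) *)
Definition on_path d (e' e : 'I_(nedges d)) : bool :=
  [exists k : 'I_d, node e %/ 2 ^ k == node e'].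

Definition input d := {ffun 'I_(nedges d) -> bool}.

Definition alive d (x : input d) (e : 'I_(nedges d)) : bool :=
  [forall e' : 'I_(nedges d), on_path e' e ==> x e'].

Definition tree_fun d (x : input d) : bool :=
  [exists e : 'I_(nedges d), is_leaf_edge e && alive x e].

Section Prob.
Variable R : realFieldType.
Local Open Scope ring_scope.

Definition prob d (p : R) (x : input d) : R :=
  \prod_(i : 'I_(nedges d)) (if x i then p else 1 - p).

End Prob.

(* Non-adaptive strategy: a permutation s of the edges; position t (0-based)
   tests edge s t. *)
Definition strategy d := {perm 'I_(nedges d)}.

Definition determined d (s : strategy d) (x : input d) (k : nat) : bool :=
  [forall y : input d,
     [forall t : 'I_(nedges d), (t < k) ==> (y (s t) == x (s t))]
     ==> (tree_fun y == tree_fun x)].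

Definition nb_tests d (s : strategy d) (x : input d) : nat :=
  find (determined s x) (iota 0 (nedges d).+1).

Definition costL d (s : strategy d) (x : input d) : nat :=
  #|[set t : 'I_(nedges d) | (t < nb_tests s x) && is_leaf_edge (s t)]|.

Definition leaf_last d (s : strategy d) : Prop :=
  forall t1 t2 : 'I_(nedges d),
    ~~ is_leaf_edge (s t1) -> is_leaf_edge (s t2) -> (t1 < t2)%N.

Definition leaf_order d (s : strategy d) : seq 'I_(nedges d) :=
  [seq s t | t <- enum 'I_(nedges d) & is_leaf_edge (s t)].

Section Expect.
Variable R : realFieldType.
Local Open Scope ring_scope.

Definition Pr_f1 d (p : R) : R :=
  \sum_(x : input d | tree_fun x) prob p x.

Definition ExpCostL1 d (p : R) (s : strategy d) : R :=
  (\sum_(x : input d | tree_fun x) prob p x * (costL s x)%:R) / Pr_f1 d p.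

(* q_l(S), l >= 1: probability, conditioned on f(x) = 1, that the l-th leaf edge
   tested by S is the first leaf edge in S's order whose leaf is alive *)
Definition q_leaf d (p : R) (s : strategy d) (l : nat) : R :=
  (\sum_(x : input d | tree_fun x && (find (alive x) (leaf_order s) == l.-1)%N)
      prob p x) / Pr_f1 d p.

End Expect.

From HB Require Import structures.
From mathcomp Require Import all_boot all_order all_algebra all_fingroup.
From mathcomp Require Import zify lra.
Import Order.TTheory GRing.Theory Num.Theory.

Set Implicit Arguments.
Unset Strict Implicit.
Unset Printing Implicit Defensive.

(* Given f(x) = 1, a strategy cannot stop before it has tested some alive leaf
   edge, so cost^L(f,x,S) >= 1 + r, where r is the rank (among the leaf edges,
   in S's order) of the first alive leaf edge.  A leaf-last strategy attains
   this bound: once all internal edges are known, one alive leaf edge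
   certifies f(x) = 1.  The bound depends only on the order of the leaf edges,
   which a leaf-last strategy can reproduce; this gives (i).  For (ii),
   swapping the l-th and (l+1)-th leaf edges of an optimal leaf-last strategy
   lowers the expected bound by at least q_{l+1} - q_l, so optimality forces
   q_{l+1} <= q_l.  Nothing beyond 0 <= p <= 1 is used. *)

Lemma index_filter (T : eqType) (a : pred T) (u : T) (r : seq T) :
  a u -> index u (filter a r) = count a (take (index u r) r).
Proof.
move=> au; elim: r => //= x r IHr.
have [->|neq_xu] /= := eqVneq x u; first by rewrite au /= eqxx.
by case ax: (a x) => /=; rewrite ?(negPf neq_xu) /= IHr ?ax.
Qed.

Lemma card_ord_before n (a : pred 'I_n) (u : 'I_n) : a u ->
  #|[set t : 'I_n | (t < u)%N && a t]| = index u [seq t <- enum 'I_n | a t].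
Proof.
move=> au; rewrite index_filter // index_enum_ord takeEmask mask_enum_ord.
rewrite count_filter cardsE cardE /enum_mem -enumT size_filter.
rewrite (@eq_filter _ _ predT) // filter_predT; apply: eq_count => t /=.
by rewrite unfold_in /= nth_nseq andbC; case: ifP.
Qed.

Lemma find_swap_adjacent (T : Type) (b : pred T) (A r : seq T) (u v : T) :
  let i := find b (A ++ u :: v :: r) in
  (find b (A ++ v :: u :: r) + (i == (size A).+1) <= i + (i == size A))%N.
Proof.
rewrite /= !find_cat; case: ifP => [hasA|_].
  by have := has_find b A; rewrite hasA => /esym ltA; lia.
by rewrite /=; case: (b u); case: (b v) => /=; lia.
Qed.

Definition positions n (a : pred 'I_n) (s : {perm 'I_n}) : seq 'I_n :=
  [seq t <- enum 'I_n | a (s t)].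

Lemma stable_partition_perm n (a : pred 'I_n) (s0 : {perm 'I_n}) :
  exists s1 : {perm 'I_n},
    (forall t1 t2 : 'I_n, ~~ a (s1 t1) -> a (s1 t2) -> (t1 < t2)%N) /\
    map s1 (positions a s1) = map s0 (positions a s0).
Proof.
case: n a s0 => [|m] a s0; first by exists s0; split=> [[]|].
pose a0 t := a (s0 t).
pose Q1 := filter (predC a0) (enum 'I_m.+1).
pose Q := Q1 ++ positions a s0.
have permQ : perm_eq Q (enum 'I_m.+1) by rewrite perm_catC perm_filterC.
have sizeQ : size Q = m.+1 by rewrite (perm_size permQ) size_enum_ord.
have uniqQ : uniq Q by rewrite (perm_uniq permQ) enum_uniq.
pose pi (t : 'I_m.+1) := nth ord0 Q t.
have inj_s0pi : injective (fun t => s0 (pi t)).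
  move=> t u /perm_inj /eqP; rewrite nth_uniq ?sizeQ // => /eqP; exact: val_inj.
exists (perm inj_s0pi); split.
  have a_pi t : a0 (pi t) = (size Q1 <= t)%N.
    rewrite /pi nth_cat; case: ltnP => h.
      by have := mem_nth ord0 h; rewrite mem_filter => /andP [/negPf].
    have : nth ord0 (positions a s0) (t - size Q1) \in positions a s0.
      by rewrite mem_nth // -(ltn_add2l (size Q1)) subnKC // -size_cat sizeQ.
    by rewrite mem_filter => /andP [].
  move=> t1 t2; rewrite !permE -/(a0 (pi t1)) -/(a0 (pi t2)) !a_pi -ltnNge.
  exact: leq_trans.
have map_pi : map pi (enum 'I_m.+1) = Q.
  by rewrite -[RHS](mkseq_nth ord0) sizeQ /mkseq -val_enum_ord -map_comp.
rewrite /positions (eq_filter (a2 := fun t => a0 (pi t))); last by move=> t; rewrite permE.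
rewrite (@eq_map _ _ _ (fun t => s0 (pi t))); last by move=> t; rewrite permE.
rewrite map_comp -filter_map map_pi filter_cat -filter_predI.
rewrite (eq_filter (a2 := pred0)); last by move=> t /=; case: (a0 t).
by rewrite filter_pred0 filter_id.
Qed.

Lemma swap_adjacent_positions n (a : pred 'I_n) (s : {perm 'I_n}) k :
  (k.+1 < size (positions a s))%N ->
  exists s2 : {perm 'I_n}, (forall t, a (s2 t) = a (s t)) /\
    forall b : pred 'I_n,
      let i := find b (map s (positions a s)) in
      (find b (map s2 (positions a s2)) + (i == k.+1) <= i + (i == k))%N.
Proof.
move=> lt_k; have uniqP : uniq (positions a s) by rewrite filter_uniq ?enum_uniq.
have defP := cat_take_drop k (positions a s).
have sizeA : size (take k (positions a s)) = k.
  by rewrite size_take; case: ltnP => //; lia.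
have size_drop : (1 < size (drop k (positions a s)))%N by rewrite size_drop; lia.
case: (drop k (positions a s)) defP size_drop => [|t1 [|t2 r]] // defP _.
set A := take k (positions a s) in sizeA defP.
have a_s t : t \in positions a s -> a (s t) by rewrite mem_filter => /andP [].
have a_t1 : a (s t1) by apply: a_s; rewrite -defP mem_cat !inE eqxx orbT.
have a_t2 : a (s t2) by apply: a_s; rewrite -defP mem_cat !inE eqxx !orbT.
pose s2 : {perm 'I_n} := (tperm t1 t2 * s)%g.
have s2E t : s2 t = s (tperm t1 t2 t) by rewrite permM.
have a_s2 t : a (s2 t) = a (s t).
  by rewrite s2E; case: tpermP => [->|->|//]; rewrite a_t1 a_t2.
exists s2; split=> // b.
move: uniqP; rewrite -defP cat_uniq /= !negb_or.
case/and4P=> _ /and3P [t1A t2A _] /andP [_ t1r] /andP [t2r _].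
have s2_outside t : t1 != t -> t2 != t -> s2 t = s t by move=> *; rewrite s2E tpermD.
have -> : map s2 (positions a s2) = map s A ++ s t2 :: s t1 :: map s r.
  rewrite /positions (eq_filter a_s2) -/(positions a s) -defP map_cat /=.
  rewrite !s2E tpermL tpermR; congr (_ ++ _ :: _ :: _); apply/eq_in_map=> t tP.
    by apply: s2_outside; [apply: contraNneq t1A | apply: contraNneq t2A] => ->.
  by apply: s2_outside; [apply: contraNneq t1r | apply: contraNneq t2r] => ->.
rewrite map_cat /= -sizeA -(size_map s); exact: find_swap_adjacent.
Qed.

Notation leaf_positions s := (positions (@is_leaf_edge _) s).

Section LeafCost.
Variable d : nat.
Hypothesis d_gt0 : (0 < d)%N.
Local Notation n := (nedges d).

Lemma on_path_refl (e : 'I_n) : on_path e e.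
Proof. by apply/existsP; exists (Ordinal d_gt0); rewrite /= expn0 divn1. Qed.

Lemma on_path_leaf_eq (e' e : 'I_n) :
  on_path e' e -> is_leaf_edge e -> is_leaf_edge e' -> e' = e.
Proof.
case/existsP=> k /eqP ek _; rewrite /is_leaf_edge -ek /node => leaf_e.
move: ek; rewrite /node => ek.
have e_lt : (e + 2 < 2 ^ d.+1)%N.
  have lt_e : (e < 2 ^ d.+1 - 2)%N := ltn_ord e.
  have := expnS 2 d; have : (0 < 2 ^ d)%N by rewrite expn_gt0.
  move: lt_e; move: (2 ^ d.+1) (2 ^ d) => ? ?; lia.
case: k ek leaf_e => [[|k] lt_kd] /= ek leaf_e.
  by apply/esym/val_inj; move: ek; rewrite expn0 divn1 => /addIn.
move: leaf_e; rewrite leqNgt ltn_divLR ?expn_gt0 // => /negP[].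
by apply: leq_trans e_lt _; rewrite -expnD leq_exp2l //; lia.
Qed.

Lemma determined_nedges (s : strategy d) x : determined s x n.
Proof.
apply/forallP=> y; apply/implyP=> /forallP agree.
suff -> : y = x by [].
by apply/ffunP=> e; have := agree (s^-1 e)%g; rewrite ltn_ord permKV => /eqP.
Qed.

Lemma determined_nb_tests (s : strategy d) x : determined s x (nb_tests s x).
Proof.
have has_det : has (determined s x) (iota 0 n.+1).
  by apply/hasP; exists n; rewrite ?mem_iota ?add0n ?ltnSn ?determined_nedges.
have := nth_find 0 has_det; rewrite nth_iota ?add0n //.
by move: has_det; rewrite has_find size_iota.
Qed.

Lemma nb_tests_le (s : strategy d) x k :
  (k <= n)%N -> determined s x k -> (nb_tests s x <= k)%N.
Proof.
move=> le_kn det_k; rewrite leqNgt; apply/negP => lt_k.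
by have := before_find 0 lt_k; rewrite nth_iota ?add0n ?det_k.
Qed.

(* Keep x on the tested edges and kill every untested one: f must not change. *)
Lemma determined_tested_alive_leaf (s : strategy d) x k :
  tree_fun x -> determined s x k ->
  exists t : 'I_n, [&& (t < k)%N, is_leaf_edge (s t) & alive x (s t)].
Proof.
move=> fx det_k.
pose y : input d := [ffun e => x e && ((s^-1)%g e < k)%N].
have fy : tree_fun y.
  suff /eqP -> : tree_fun y == tree_fun x by [].
  apply: (implyP (forallP det_k y)); apply/forallP => t.
  by apply/implyP => lt_tk; rewrite /y ffunE permK lt_tk andbT.
case/existsP: fy => e /andP [leaf_e alive_e].
exists (s^-1 e)%g; rewrite permKV leaf_e /=.
have := forallP alive_e e; rewrite on_path_refl /= ffunE => /andP [_ ->] /=.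
apply/forallP => e'; apply/implyP => path_e'; have := forallP alive_e e'.
by rewrite path_e' /= ffunE => /andP [].
Qed.

Lemma determined_after_alive_leaf (s : strategy d) x (t : 'I_n) :
  leaf_last s -> is_leaf_edge (s t) -> alive x (s t) -> determined s x t.+1.
Proof.
move=> ll leaf_t alive_t; apply/forallP=> y; apply/implyP=> /forallP agree.
have -> : tree_fun x by apply/existsP; exists (s t); rewrite leaf_t.
apply/eqP/existsP; exists (s t); rewrite leaf_t /=.
apply/forallP => e'; apply/implyP => path_e'.
have tested : ((s^-1)%g e' < t.+1)%N.
  case leaf_e' : (is_leaf_edge e').
    by rewrite (on_path_leaf_eq path_e' leaf_t leaf_e') permK.
  by apply: ltnW; apply: ll; rewrite ?permKV ?leaf_e'.
have := agree (s^-1 e')%g; rewrite tested permKV /= => /eqP ->.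
by have := forallP alive_t e'; rewrite path_e'.
Qed.

Definition leaf_tests_before (s : strategy d) k :=
  [set t : 'I_n | (t < k)%N && is_leaf_edge (s t)].

Definition first_alive_leaf (s : strategy d) x := find (alive x) (leaf_order s).

Lemma first_alive_leafE (s : strategy d) x :
  first_alive_leaf s x = find (fun t => alive x (s t)) (leaf_positions s).
Proof. exact: find_map. Qed.

Lemma card_leaf_tests_before_succ (s : strategy d) (t : 'I_n) :
  is_leaf_edge (s t) ->
  #|leaf_tests_before s t.+1| = (index t (leaf_positions s)).+1.
Proof.
move=> leaf_t; rewrite -(@card_ord_before _ (fun t => is_leaf_edge (s t))) //.
have -> : leaf_tests_before s t.+1 =
    t |: [set u : 'I_n | (u < t)%N && is_leaf_edge (s u)].
  apply/setP => u; rewrite !inE ltnS leq_eqVlt.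
  have [->|neq_ut] := eqVneq u t; first by rewrite eqxx leaf_t.
  by move: neq_ut; rewrite -val_eqE => /negPf ->.
by rewrite cardsU1 inE ltnn.
Qed.

Lemma card_leaf_tests_before_mono (s : strategy d) k1 k2 :
  (k1 <= k2)%N -> (#|leaf_tests_before s k1| <= #|leaf_tests_before s k2|)%N.
Proof.
move=> le_k; apply/subset_leq_card/subsetP => u; rewrite !inE.
by case/andP => lt_u ->; rewrite (leq_trans lt_u).
Qed.

Lemma has_alive_leaf (s : strategy d) x :
  tree_fun x -> has (fun t => alive x (s t)) (leaf_positions s).
Proof.
case/existsP => e /andP [leaf_e alive_e]; apply/hasP; exists (s^-1 e)%g.
  by rewrite mem_filter permKV leaf_e mem_enum.
by rewrite permKV.
Qed.

Lemma costL_ge (s : strategy d) x :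
  tree_fun x -> ((first_alive_leaf s x).+1 <= costL s x)%N.
Proof.
move=> fx; have [t /and3P [lt_t leaf_t alive_t]] :=
  determined_tested_alive_leaf fx (determined_nb_tests s x).
apply: leq_trans (card_leaf_tests_before_mono s lt_t).
rewrite card_leaf_tests_before_succ // ltnS first_alive_leafE.
by apply: sub_find => u /eqP ->.
Qed.

Lemma costL_leaf_last (s : strategy d) x :
  leaf_last s -> tree_fun x -> costL s x = (first_alive_leaf s x).+1.
Proof.
move=> ll fx; apply/eqP; rewrite eqn_leq costL_ge // andbT first_alive_leafE.
have has_alive := has_alive_leaf s fx.
have [t0 _ _] := hasP has_alive.
set i := find (fun t => alive x (s t)) _.
have lt_i : (i < size (leaf_positions s))%N by rewrite -has_find.
set t := nth t0 (leaf_positions s) i.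
have alive_t : alive x (s t) := nth_find t0 has_alive.
have leaf_t : is_leaf_edge (s t).
  by have := mem_nth t0 lt_i; rewrite mem_filter => /andP [].
apply: leq_trans (card_leaf_tests_before_mono s
  (nb_tests_le (ltn_ord t) (determined_after_alive_leaf ll leaf_t alive_t))) _.
by rewrite card_leaf_tests_before_succ // index_uniq // filter_uniq ?enum_uniq.
Qed.

End LeafCost.

Section Expectation.
Local Open Scope ring_scope.
Variables (R : realFieldType) (d : nat) (p : R).
Hypotheses (d_gt0 : (0 < d)%N) (p_ge0 : 0 <= p) (p_le1 : p <= 1).
Local Notation Pr := (Pr_f1 d p).

Lemma prob_ge0 (x : input d) : 0 <= prob p x.
Proof. by apply: prodr_ge0 => i _; case: (x i); rewrite ?subr_ge0. Qed.

Lemma Pr_f1_ge0 : 0 <= Pr.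
Proof. by apply: sumr_ge0 => x _; apply: prob_ge0. Qed.

Definition rank_cost (s : strategy d) : R :=
  \sum_(x : input d | tree_fun x) prob p x * (first_alive_leaf s x).+1%:R.

Lemma ExpCostL1_ge (s : strategy d) : rank_cost s / Pr <= ExpCostL1 p s.
Proof.
rewrite ler_wpM2r ?invr_ge0 ?Pr_f1_ge0 //; apply: ler_sum => x fx.
by rewrite ler_wpM2l ?prob_ge0 // ler_nat costL_ge.
Qed.

Lemma ExpCostL1_leaf_last (s : strategy d) :
  leaf_last s -> ExpCostL1 p s = rank_cost s / Pr.
Proof.
by move=> ll; congr (_ / _); apply: eq_bigr => x fx; rewrite costL_leaf_last.
Qed.

Lemma leaf_last_minimizer_exists : exists s : strategy d,
  leaf_last s /\ forall s' : strategy d, ExpCostL1 p s <= ExpCostL1 p s'.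
Proof.
pose s0 := [arg min_(s < (1%g : strategy d)) ExpCostL1 p s]%O.
have [s1 [ll1 same_order]] := stable_partition_perm (@is_leaf_edge d) s0.
exists s1; split => // s'; rewrite ExpCostL1_leaf_last //.
have -> : rank_cost s1 = rank_cost s0.
  by apply: eq_bigr => x _; congr (_ * (find _ _).+1%:R); exact: same_order.
apply: le_trans (ExpCostL1_ge s0) _; rewrite /s0; case: arg_minP => // s _; exact.
Qed.

Lemma q_leaf_succ_le (s : strategy d) l : leaf_last s ->
  (forall s' : strategy d, ExpCostL1 p s <= ExpCostL1 p s') ->
  (0 < l)%N -> q_leaf p s l.+1 <= q_leaf p s l.
Proof.
move=> ll s_min; case: l => [//|k] _.
pose N j := \sum_(x : input d | tree_fun x && (first_alive_leaf s x == j)%N) prob p x.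
change (N k.+1 / Pr <= N k / Pr).
have [lt_k|ge_k] := ltnP k.+1 (size (leaf_positions s)); last first.
  suff -> : N k.+1 = 0.
    by rewrite mul0r divr_ge0 ?Pr_f1_ge0 ?sumr_ge0 // => x _; apply: prob_ge0.
  apply: big_pred0 => x; apply/negP => /andP [fx /eqP first_x].
  move: (has_alive_leaf s fx).
  by rewrite has_find -first_alive_leafE first_x ltnNge ge_k.
have [s2 [leaf_s2 swap_s2]] := swap_adjacent_positions lt_k.
have ll2 : leaf_last s2 by move=> t1 t2; rewrite !leaf_s2; apply: ll.
have exchange : rank_cost s2 + N k.+1 <= rank_cost s + N k.
  rewrite /rank_cost /N !big_mkcondr -!big_split /=; apply: ler_sum => x fx.
  have indicator (b : bool) : (if b then prob p x else 0) = prob p x * (b : nat)%:R.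
    by case: b; rewrite ?mulr1 ?mulr0.
  rewrite !indicator -!mulrDr -!natrD ler_wpM2l ?prob_ge0 // ler_nat.
  by have := swap_s2 (alive x); rewrite !addSn ltnS.
have := s_min s2; rewrite !ExpCostL1_leaf_last //.
have Pr_inv_ge0 : 0 <= Pr^-1 by rewrite invr_ge0 Pr_f1_ge0.
have := ler_wpM2r Pr_inv_ge0 exchange; rewrite !mulrDl; lra.
Qed.

End Expectation.

Unset Implicit Arguments.
Local Open Scope ring_scope.

Theorem lemma3 (R : realFieldType) (eps : R) (d : nat) :
  0 < eps < 1 -> (1 <= d)%N ->
  let p := (1 + eps) / 2 in
  (exists s : strategy d, leaf_last s /\
     forall s' : strategy d, ExpCostL1 p s <= ExpCostL1 p s') /\
  (forall s : strategy d, leaf_last s ->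
     (forall s' : strategy d, ExpCostL1 p s <= ExpCostL1 p s') ->
     forall l : nat, (1 <= l <= 2 ^ d - 1)%N -> q_leaf p s l.+1 <= q_leaf p s l).
Proof.
move=> /andP [eps_gt0 eps_lt1] d_gt0 p.
have p_ge0 : 0 <= p by rewrite /p; lra.
have p_le1 : p <= 1 by rewrite /p; lra.
split; first exact: leaf_last_minimizer_exists.
move=> s ll s_min l /andP [l_gt0 _]; exact: q_leaf_succ_le.
Qed.
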